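(* Let $B=(V,E,>)$ be a non-elementary $k$-simple ordered Bratteli diagram, let $X_B$ be its space of infinite paths and $\sigma:X_B\to X_B$ its Bratteli–Vershik map. Then $(X_B,\sigma)$ has exactly $k$ minimal subsets.
   Context: A Bratteli diagram $B=(V,E)$ has finite nonempty vertex sets $V^0=\{v_0\},V^1,V^2,\dots$ and finite edge sets $E^0,E^1,\dots$, with source and range maps $s(E^n)=V^n$, $r(E^n)=V^{n+1}$. Finite paths are sequences of consecutive edges; a vertex $w$ at level $m$ is connected to a vertex $v$ at level $n<m$ if some finite path goes from $v$ to $w$. $B$ is $k$-simple if for each $n\ge1$ there are pairwise disjoint $V^n_1,\dots,V^n_k\subseteq V^n$ with (i) $s(r^{-1}(v))\subseteq V^n_i$ for every $v\in V^{n+1}_i$; (ii) for each $i,n$ there is $m>n$ such that every vertex of $V^m_i$ is connected to every vertex of $V^n_i$. Put $V^n_o=V^n\setminus\bigcup_iV^n_i$. $B$ is non-elementary if for every $n$ there is $m>n$ such that the number of paths between any vertex of $V^n_o$ and any vertex of $V^m_o$ is either $0$ or at least $2$. An order on $B$ is a linear order on each $r^{-1}(v)$; it induces the lexicographic order on finite paths with common range (compare at the highest-level edge where they differ); $e+1$ denotes the successor of $e$. $E_{\max},E_{\min}$ are the maximal/minimal edges, $X_{\max},X_{\min}$ the infinite paths all of whose edges are maximal/minimal. $(V,E,>)$ is a $k$-simple ordered Bratteli diagram if: (1) $(V,E)$ is $k$-simple; (2) there are infinite paths $z_{i,\max},z_{i,\min}$ ($1\le i\le k$) whose level-$n$ vertices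 lie in $V^n_i$ for all $n\ge1$, with $X_{\max}=\{z_{1,\max},\dots,z_{k,\max}\}$, $X_{\min}=\{z_{1,\min},\dots,z_{k,\min}\}$; then there is $L$ such that for $n\ge L$ and $v\in V^n_o$ the maximal (resp. minimal) finite path from $v_0$ to $v$ passes at level $1$ through $V^1_i$ for some $i$, written $m_+(v)=i$ (resp. $m_-(v)=i$); (3) for $v\in V^n_o$: (a) for every edge $e$ with $s(e)=v$, $m_-(s(e+1))=m_+(v)$ (if $e$ is maximal, $s(e+1)$ means the level-$n$ source of the lexicographic successor of a non-maximal finite path starting with $e$ and ending at some level $m>n$); (b) if $e\notin E_{\max}$, $r(e)=v$, $s(e)\in V^{n-1}_i$ and $n\ge3$, then $m_-(s(e+1))=i$. The Vershik map: $\sigma(z_{i,\max})=z_{i,\min}$; for other $x=(x^1,x^2,\dots)$, let $d$ be least with $x^d$ not maximal, and set $\sigma(x)=(f^1,\dots,f^{d-1},x^d+1,x^{d+1},\dots)$ where $(f^1,\dots,f^{d-1})$ is the minimal path from $v_0$ to $s(x^d+1)$. $X_B$ carries the topology generated by cylinder sets and $\sigma$ is a homeomorphism. A minimal subset is a nonempty closed invariant set containing no nonempty proper closed invariant subset. *)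

From mathcomp Require Import all_boot.
Set Implicit Arguments.
Unset Strict Implicit.
Unset Printing Implicit Defensive.

Record bratteli := Bratteli {
  V : nat -> finType;
  E : nat -> finType;
  src : forall n, E n -> V n;
  rng : forall n, E n -> V n.+1;
  V0_single : #|V 0| = 1;
  V_nonempty : forall n, 0 < #|V n|;
  src_surj : forall n (v : V n), exists e, src e = v;
  rng_surj : forall n (v : V n.+1), exists e, @rng n e = v
}.

Unset Implicit Arguments.
Arguments src {b n} e.
Arguments rng {b n} e.

Section Defs.
Variable B : bratteli.

(* a "finite path" is represented by p : forall j, E B j, of which only the
   edges p n, ..., p (m-1) (levels n .. m-1) are relevant. *)
Definition epath := forall j, E B j.

Definition ends_at (p : epath) (m : nat) : V B m -> Prop :=
  match m return V B m -> Prop with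
  | 0 => fun _ => False
  | m'.+1 => fun w => rng (p m') = w
  end.

Definition fpath (n m : nat) (p : epath) (w : V B m) : Prop :=
  n < m /\
  (forall j, n <= j -> j.+1 < m -> rng (p j) = src (p j.+1)) /\
  ends_at p m w.

Definition path_between (n m : nat) (v : V B n) (w : V B m) (p : epath) : Prop :=
  fpath n m p w /\ src (p n) = v.

Definition connected (n m : nat) (v : V B n) (w : V B m) : Prop :=
  exists p, path_between n m v w p.

Definition zero_or_many_paths (n m : nat) (v : V B n) (w : V B m) : Prop :=
  (~ exists p, path_between n m v w p) \/
  (exists p q, path_between n m v w p /\ path_between n m v w q /\
               exists j, n <= j < m /\ p j <> q j).

(* k-simplicity: cls n v = Some i  means  v \in V^n_i ; None means v \in V^n_o.
   (The classes V^n_1,...,V^n_k are thus pairwise disjoint by construction.) *)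
Definition k_simple (k : nat) (cls : forall n, V B n -> option 'I_k) : Prop :=
  (forall n, 1 <= n -> forall (e : E B n) (i : 'I_k),
      cls n.+1 (rng e) = Some i -> cls n (src e) = Some i) /\
  (forall (i : 'I_k) n, 1 <= n -> exists m, n < m /\
      forall (v : V B n) (w : V B m),
        cls n v = Some i -> cls m w = Some i -> connected n m v w).

Definition non_elementary (k : nat) (cls : forall n, V B n -> option 'I_k) : Prop :=
  forall n, 1 <= n -> exists m, n < m /\
    forall (v : V B n) (w : V B m),
      cls n v = None -> cls m w = None -> zero_or_many_paths n m v w.

(* An order: ord n : E n -> nat ranks edges, injectively on each r^{-1}(v);
   the linear order on r^{-1}(v) is  e < e'  iff  ord e < ord e'. *)
Variable ord : forall n, E B n -> nat.

Definition is_order : Prop :=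
  forall n (e e' : E B n), rng e = rng e' -> ord n e = ord n e' -> e = e'.

Definition maxE n (e : E B n) : Prop :=
  forall e' : E B n, rng e' = rng e -> ord n e' <= ord n e.
Definition minE n (e : E B n) : Prop :=
  forall e' : E B n, rng e' = rng e -> ord n e <= ord n e'.
Definition succE n (e e' : E B n) : Prop :=
  rng e' = rng e /\ ord n e < ord n e' /\
  forall e'' : E B n, rng e'' = rng e -> ord n e < ord n e'' -> ord n e' <= ord n e''.

Definition lexlt (n m : nat) (p q : epath) : Prop :=
  exists j, n <= j < m /\ (forall i, j < i < m -> p i = q i) /\ ord j (p j) < ord j (q j).

Definition lexsucc (n m : nat) (w : V B m) (p q : epath) : Prop :=
  fpath n m p w /\ fpath n m q w /\ lexlt n m p q /\
  ~ (exists r, fpath n m r w /\ lexlt n m p r /\ lexlt n m r q).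

Definition maxpath (m : nat) (p : epath) (u : V B m) : Prop :=
  fpath 0 m p u /\ forall q, fpath 0 m q u -> ~ lexlt 0 m p q.
Definition minpath (m : nat) (p : epath) (u : V B m) : Prop :=
  fpath 0 m p u /\ forall q, fpath 0 m q u -> ~ lexlt 0 m q p.

Variable k : nat.
Variable cls : forall n, V B n -> option 'I_k.

Definition mplus (m : nat) (u : V B m) (i : 'I_k) : Prop :=
  exists p, maxpath m p u /\ cls 1 (rng (p 0)) = Some i.
Definition mminus (m : nat) (u : V B m) (i : 'I_k) : Prop :=
  exists p, minpath m p u /\ cls 1 (rng (p 0)) = Some i.

Definition XB := {x : epath | forall n, rng (x n) = src (x n.+1)}.
Definition pth (x : XB) : epath := proj1_sig x.

Definition k_simple_ordered (zmax zmin : 'I_k -> XB) : Prop :=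
  is_order /\
  k_simple k cls /\
  (forall i n, 1 <= n -> cls n (src (pth (zmax i) n)) = Some i) /\
  (forall i n, 1 <= n -> cls n (src (pth (zmin i) n)) = Some i) /\
  (forall x : XB, (forall n, maxE n (pth x n)) <->
                  exists i, forall n, pth x n = pth (zmax i) n) /\
  (forall x : XB, (forall n, minE n (pth x n)) <->
                  exists i, forall n, pth x n = pth (zmin i) n) /\
  (exists L,
     (forall n, L <= n -> 1 <= n -> forall v : V B n, cls n v = None ->
        (exists i, mplus n v i) /\ (exists i, mminus n v i)) /\
     (* (3)(a): for v in V^n_o and s(e) = v, m_-(s(e+1)) = m_+(v), where
        s(e+1) is the level-n source of the lexicographic successor q of a
        (non-maximal) finite path p from level n starting with e *)
     (forall n, L <= n -> 1 <= n -> forall v : V B n, cls n v = None ->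
        forall e : E B n, src e = v ->
        forall m (w : V B m) (p q : epath), p n = e -> lexsucc n m w p q ->
          exists i, mplus n v i /\ mminus n (src (q n)) i) /\
     (forall n', L <= n'.+1 -> 3 <= n'.+1 -> forall (e : E B n') (i : 'I_k),
        cls n'.+1 (rng e) = None -> ~ maxE n' e -> cls n' (src e) = Some i ->
        forall e', succE n' e e' -> mminus n' (src e') i)).

Definition vershik (zmax zmin : 'I_k -> XB) (x y : XB) : Prop :=
  (exists i, (forall n, pth x n = pth (zmax i) n) /\
             (forall n, pth y n = pth (zmin i) n)) \/
  (exists d, (forall j, j < d -> maxE j (pth x j)) /\ ~ maxE d (pth x d) /\
     succE d (pth x d) (pth y d) /\
     (forall j, d < j -> pth y j = pth x j) /\
     (d = 0 \/ minpath d (pth y) (src (pth y d)))).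

End Defs.

Definition is_open (B : bratteli) (U : XB B -> Prop) : Prop :=
  forall x, U x -> exists N, forall y : XB B,
    (forall n, n < N -> pth B y n = pth B x n) -> U y.
Definition is_closed (B : bratteli) (A : XB B -> Prop) : Prop :=
  is_open B (fun x => ~ A x).

Definition invariant (B : bratteli) (sigma : XB B -> XB B) (A : XB B -> Prop) : Prop :=
  forall x, A x <-> A (sigma x).

Definition minimal_set (B : bratteli) (sigma : XB B -> XB B) (A : XB B -> Prop) : Prop :=
  (exists x, A x) /\ is_closed B A /\ invariant B sigma A /\
  forall A' : XB B -> Prop, (forall x, A' x -> A x) ->
    (exists x, A' x) -> is_closed B A' -> invariant B sigma A' ->
    forall x, A x -> A' x.

(** Every σ-invariant set is closed under tail equivalence: a path whose edges
    below level [m] are maximal is sent by σ to the path with the successor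
    edge at level [m], so by induction on [m] any two tail-equivalent paths
    are linked by a chain of σ-steps within finite tail classes.  Pushing the
    edges below level [M] to their maxima and letting [M] grow, compactness of
    the path space puts a maximal path [z_{i,max}] into every nonempty closed
    invariant set [A].  By [k]-simplicity every vertex of [V^n_i] connects
    upwards to [z_{i,max}], so [A] contains every path living in the classes
    [V^n_i]; these [k] closed invariant sets are therefore exactly the minimal
    subsets. *)
From Stdlib Require Import Classical FunctionalExtensionality ProofIrrelevance.
From Stdlib Require Import IndefiniteDescription ChoiceFacts.
From Pilot Require Import Defs.
From mathcomp Require Import all_boot zify.

Set Implicit Arguments.
Unset Strict Implicit.

Definition inf_often (P : nat -> Prop) : Prop := forall K, exists M, K <= M /\ P M.

Lemma eventually_forall_fin (T : finType) (R : T -> nat -> Prop) :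
  (forall t, exists K, forall M, K <= M -> R t M) ->
  exists K, forall M, K <= M -> forall t, R t M.
Proof.
move=> hR.
suff [K hK] : exists K, forall M, K <= M -> forall t, t \in enum T -> R t M.
  by exists K => M hM t; apply: hK; rewrite ?mem_enum.
elim: (enum T) => [|t s [K hK]]; first by exists 0.
have [Kt hKt] := hR t.
exists (maxn K Kt) => M; rewrite geq_max => /andP [hKM hKtM] u.
by rewrite inE => /orP [/eqP ->|hu]; [exact: hKt | exact: hK].
Qed.

Lemma inf_often_pigeonhole {T : finType} {P : nat -> Prop} (f : nat -> T) :
  inf_often P -> exists t, inf_often (fun M => P M /\ f M = t).
Proof.
move=> hP; apply: NNPP => hnone.
have [K hK] : exists K, forall M, K <= M -> forall t, ~ (P M /\ f M = t).
  apply: eventually_forall_fin => t; apply: NNPP => ht; apply: hnone.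
  exists t => K; apply: NNPP => hK; apply: ht.
  by exists K => M hM hPM; apply: hK; exists M.
have [M [hKM hPM]] := hP K.
exact: hK M hKM (f M) (conj hPM erefl).
Qed.

Lemma dependent_choice_nat {T : Type} {G : nat -> T -> Prop} {R : nat -> T -> T -> Prop} :
  (exists t, G 0 t) -> (forall n t, G n t -> exists t', G n.+1 t' /\ R n t t') ->
  exists f : nat -> T, forall n, G n (f n) /\ R n (f n) (f n.+1).
Proof.
move=> [t0 h0] hstep.
pose A := {nt : nat * T | G nt.1 nt.2}.
have hR : forall a : A, exists b : A,
    (sval b).1 = (sval a).1.+1 /\ R (sval a).1 (sval a).2 (sval b).2.
  move=> [[n t] /= hnt]; have [t' [ht' hRt]] := hstep n t hnt.
  by exists (exist _ (n.+1, t') ht').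
have [f [f0 hf]] := functional_choice_imp_functional_dependent_choice
  functional_choice _ hR (exist _ (0, t0) h0).
have hlev : forall n, (sval (f n)).1 = n.
  by elim=> [|n IH]; [rewrite f0 | rewrite (proj1 (hf n)) IH].
exists (fun n => (sval (f n)).2) => n; split.
  by have := svalP (f n); rewrite hlev.
by have := proj2 (hf n); rewrite hlev.
Qed.

Section Bratteli.
Variable B : bratteli.

Definition linked (p : epath B) (j : nat) : Prop := rng (p j) = src (p j.+1).
Definition agree_below (p q : epath B) (N : nat) : Prop := forall j, j < N -> p j = q j.
Definition agree_from (p q : epath B) (m : nat) : Prop := forall j, m <= j -> p j = q j.
Definition glue (p q : epath B) (N : nat) : epath B := fun j => if j < N then p j else q j.

Lemma XB_ext (x y : XB B) : (forall n, pth B x n = pth B y n) -> x = y.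
Proof.
case: x => x hx; case: y => y hy /= h.
have exy : x = y by apply: functional_extensionality_dep.
by subst y; rewrite (proof_irrelevance _ hx hy).
Qed.

Lemma glue_linked (p q : epath B) N j :
  (j.+1 < N -> linked p j) -> (N <= j -> linked q j) ->
  (j.+1 = N -> rng (p j) = src (q j.+1)) -> linked (glue p q N) j.
Proof.
rewrite /linked /glue => hp hq hpq.
case: (ltnP j.+1 N) => h1; first by rewrite (ltnW h1); exact: hp.
case: (ltnP j N) => h2; last exact: hq.
by apply: hpq; lia.
Qed.

Definition set_edge (p : epath B) {m} (e : E B m) : epath B :=
  fun j => match PeanoNat.Nat.eq_dec m j with
           | left h => eq_rect m (E B) e j h
           | right _ => p j
           end.

Lemma set_edge_eq p m (e : E B m) : set_edge p e m = e.
Proof.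
rewrite /set_edge; case: (PeanoNat.Nat.eq_dec m m) => [h|] //.
by rewrite (eq_irrelevance h erefl).
Qed.

Lemma set_edge_neq p m (e : E B m) j : j <> m -> set_edge p e j = p j.
Proof. by rewrite /set_edge; case: (PeanoNat.Nat.eq_dec m j) => [h|] // /(_ (esym h)). Qed.

Lemma closed_mem (A : XB B -> Prop) (y : XB B) : is_closed B A ->
  (forall N, exists z, A z /\ agree_below (pth B z) (pth B y) N) -> A y.
Proof.
move=> hcl hnear; apply: NNPP => nAy.
have [N hN] := hcl y nAy; have [z [Az hz]] := hnear N.
exact: hN z hz Az.
Qed.

(* König's lemma: the prefix of length [n] is chosen so that infinitely many
   [x M] begin with it. *)
Lemma XB_cluster (x : nat -> XB B) :
  exists y : XB B, forall N, inf_often (fun M => agree_below (pth B (x M)) (pth B y) N).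
Proof.
pose G n p := inf_often (fun M => agree_below (pth B (x M)) p n).
have hstep : forall n p, G n p -> exists q, G n.+1 q /\ agree_below q p n.
  move=> n p hp; have [e he] := inf_often_pigeonhole (fun M => pth B (x M) n) hp.
  have [M0 [_ [hM0 eM0]]] := he 0.
  exists (pth B (x M0)); split=> [K|j hj]; last by rewrite hM0.
  have [M [hKM [hM eM]]] := he K; exists M; split=> // j.
  rewrite ltnS leq_eqVlt => /orP [/eqP ->|hj]; first by rewrite eM eM0.
  by rewrite hM // hM0.
have G0 : G 0 (pth B (x 0)) by move=> K; exists K.
have [f hf] := dependent_choice_nat (ex_intro _ _ G0) hstep.
have fcoh : forall j m, j < m -> f m j = f j.+1 j.
  move=> j; elim=> [|m IH] //; rewrite ltnS leq_eqVlt => /orP [/eqP ->|hjm] //.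
  by rewrite (proj2 (hf m)) ?IH.
have ylinked : forall j, linked (fun j => f j.+1 j) j.
  move=> j; have [M [_ hM]] := proj1 (hf j.+2) 0.
  rewrite /linked -(fcoh j j.+2) // -!hM //; exact: (svalP (x M) j).
exists (exist _ _ ylinked) => N K.
have [M [hKM hM]] := proj1 (hf N) K.
by exists M; split=> // j hj; rewrite hM // fcoh.
Qed.

Section Order.
Variable ord : forall n, E B n -> nat.
Arguments ord : clear implicits.

Lemma exists_max_edge n (u : V B n.+1) : exists e : E B n, rng e = u /\ maxE B ord n e.
Proof.
have [e0 he0] := rng_surj u.
case: (@arg_maxnP _ e0 (fun e : E B n => rng e == u) (ord n)); first exact/eqP.
move=> e /eqP he hmax; exists e; split=> // e' he'.
by apply: hmax; rewrite he' he.
Qed.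

Lemma exists_pred_edge n (e e1 : E B n) : rng e1 = rng e -> ord n e1 < ord n e ->
  exists e0, [/\ rng e0 = rng e, ord n e1 <= ord n e0 & succE B ord n e0 e].
Proof.
move=> he1 hlt.
case: (@arg_maxnP _ e1 (fun e' : E B n => (rng e' == rng e) && (ord n e' < ord n e)) (ord n)).
  by rewrite he1 eqxx hlt.
move=> e0 /andP [/eqP he0 hlt0] hmax.
exists e0; split=> //; first by apply: hmax; rewrite he1 eqxx hlt.
split; first by rewrite he0.
split=> // e'' he'' hlt''; rewrite leqNgt; apply/negP => hlt'.
by have := hmax e''; rewrite he'' he0 eqxx hlt' => /(_ isT); lia.
Qed.

Lemma succE_uniq n (e e1 e2 : E B n) : is_order B ord ->
  succE B ord n e e1 -> succE B ord n e e2 -> e1 = e2.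
Proof.
move=> hord [r1 [o1 m1]] [r2 [o2 m2]]; apply: hord; first by rewrite r1 r2.
by have := m1 e2 r2 o2; have := m2 e1 r1 o1; lia.
Qed.

Lemma exists_max_prefix M (p : epath B) : (forall j, M <= j -> linked p j) ->
  exists z : XB B,
    (forall j, j < M -> maxE B ord j (pth B z j)) /\ agree_from (pth B z) p M.
Proof.
elim: M p => [|M IH] p hp.
  by exists (exist _ p (fun j => hp j (leq0n j))).
have [e [he emax]] := exists_max_edge (src (p M.+1)).
have hp' : forall j, M <= j -> linked (set_edge p e) j.
  move=> j; rewrite leq_eqVlt => /orP [/eqP <-|hj].
    by rewrite /linked set_edge_eq set_edge_neq; [| lia].
  by rewrite /linked !set_edge_neq; [exact: hp | lia | lia].
have [z [zmax zag]] := IH _ hp'.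
exists z; split=> [j|j hj].
  rewrite ltnS leq_eqVlt => /orP [/eqP ->|]; last exact: zmax.
  by rewrite zag // set_edge_eq.
by rewrite zag ?set_edge_neq //; lia.
Qed.

Section Vershik.
Variables (k : nat) (zmax zmin : 'I_k -> XB B) (sigma : XB B -> XB B).
Hypothesis ord_inj : is_order B ord.
Hypothesis max_paths : forall x : XB B, (forall n, maxE B ord n (pth B x n)) <->
  exists i, forall n, pth B x n = pth B (zmax i) n.
Hypothesis sigma_vershik : forall x, vershik B ord k zmax zmin x (sigma x).

Lemma zmax_max i n : maxE B ord n (pth B (zmax i) n).
Proof. by apply: (proj2 (max_paths (zmax i))); exists i. Qed.

Lemma max_path_zmax (x : XB B) : (forall n, maxE B ord n (pth B x n)) -> exists i, x = zmax i.
Proof. by move=> /max_paths [i hi]; exists i; apply: XB_ext. Qed.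

Lemma vershik_succ (z : XB B) m :
  (forall j, j < m -> maxE B ord j (pth B z j)) -> ~ maxE B ord m (pth B z m) ->
  succE B ord m (pth B z m) (pth B (sigma z) m) /\
  agree_from (pth B (sigma z)) (pth B z) m.+1.
Proof.
move=> hbelow hm.
case: (sigma_vershik z) => [[i [hz _]]|[d [hd [hdm [hsucc [hag _]]]]]].
  by case: hm; rewrite hz; exact: zmax_max.
have edm : d = m.
  case: (ltngtP d m) => // h; [by case: hdm; apply: hbelow | by case: hm; apply: hd].
by subst d; split=> // j hj; apply: hag.
Qed.

Lemma vershik_agree_from (x : XB B) :
  (exists i, x = zmax i /\ sigma x = zmin i) \/
  exists d, agree_from (pth B (sigma x)) (pth B x) d.
Proof.
case: (sigma_vershik x) => [[i [hx hsx]]|[d [_ [_ [_ [hag _]]]]]].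
  by left; exists i; split; apply: XB_ext.
by right; exists d.+1.
Qed.

Lemma invariantC (A : XB B -> Prop) :
  Defs.invariant B sigma A -> Defs.invariant B sigma (fun x => ~ A x).
Proof. by move=> hA x; rewrite (hA x). Qed.

Section TailStep.
Variable m : nat.
Hypothesis tail_closed : forall A, Defs.invariant B sigma A ->
  forall x x' : XB B, agree_from (pth B x) (pth B x') m -> A x -> A x'.

(* Maximize the edges below [m]; then σ increments the edge at level [m]. *)
Lemma invariant_succ_step A (z : XB B) e :
  Defs.invariant B sigma A -> A z -> succE B ord m (pth B z m) e ->
  exists z', [/\ A z', pth B z' m = e & agree_from (pth B z') (pth B z) m.+1].
Proof.
move=> hA Az hsucc.
have [zs [zs_max zs_ag]] := exists_max_prefix (fun j (_ : m <= j) => svalP z j).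
have Azs : A zs by apply: (tail_closed hA _ Az) => j hj; rewrite zs_ag.
have zs_m : pth B zs m = pth B z m by rewrite zs_ag.
have zs_nmax : ~ maxE B ord m (pth B zs m).
  case: hsucc => [he [hlt _]] hmax.
  by have := hmax e; rewrite zs_m => /(_ he); lia.
have [hsucc' hag] := vershik_succ zs_max zs_nmax.
exists (sigma zs); split; first exact/(hA zs).
  have hsucc_zs : succE B ord m (pth B zs m) e by rewrite zs_m.
  exact: succE_uniq ord_inj hsucc' hsucc_zs.
by move=> j hj; rewrite hag // zs_ag //; lia.
Qed.

Lemma invariant_climb A (x : XB B) e :
  Defs.invariant B sigma A -> A x -> rng e = rng (pth B x m) ->
  ord m (pth B x m) <= ord m e ->
  exists z, [/\ A z, pth B z m = e & agree_from (pth B z) (pth B x) m.+1].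
Proof.
move=> hA Ax; have [n hn] : exists n, ord m e < n by exists (ord m e).+1.
elim: n e hn => [|n IHn] e // hn he hle.
case: (ltngtP (ord m (pth B x m)) (ord m e)) => hc; last first.
- by exists x; split=> //; apply: ord_inj.
- by move: hle; rewrite leqNgt hc.
have [e0 [he0 hle0 hsucc]] := exists_pred_edge (esym he) hc.
have e0_lt : ord m e0 < n by case: hsucc => _ [] *; lia.
have [z1 [Az1 hz1 hag1]] := IHn e0 e0_lt (etrans he0 he) hle0.
have hsucc1 : succE B ord m (pth B z1 m) e by rewrite hz1.
have [z [Az hz hag]] := invariant_succ_step hA Az1 hsucc1.
by exists z; split=> // j hj; rewrite hag // hag1.
Qed.

End TailStep.

Lemma invariant_agree_from m A : Defs.invariant B sigma A ->
  forall x x' : XB B, agree_from (pth B x) (pth B x') m -> A x -> A x'.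
Proof.
elim: m A => [|m IH] A hA x x' hag Ax.
  by have -> : x' = x by apply: XB_ext => n; rewrite hag.
have climb : forall A' (y y' : XB B), Defs.invariant B sigma A' ->
    agree_from (pth B y) (pth B y') m.+1 -> ord m (pth B y m) <= ord m (pth B y' m) ->
    A' y -> A' y'.
  move=> A' y y' hA' hyy' hle A'y.
  have hr : rng (pth B y' m) = rng (pth B y m).
    by rewrite (svalP y m) (svalP y' m); have := hyy' m.+1 (leqnn _); rewrite /pth => ->.
  have [z [A'z hz hzy]] := invariant_climb IH hA' A'y hr hle.
  apply: (IH _ hA' _ _ _ A'z) => j; rewrite leq_eqVlt => /orP [/eqP <-|hj] //.
  by rewrite hzy // hyy'.
case: (leqP (ord m (pth B x m)) (ord m (pth B x' m))) => hle.
  exact: climb _ _ _ hA hag hle Ax.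
apply: NNPP => nAx'.
have hag' : agree_from (pth B x') (pth B x) m.+1 by move=> j hj; rewrite hag.
exact: (climb _ _ _ (invariantC hA) hag' (ltnW hle) nAx' : ~ A x).
Qed.

Lemma closed_invariant_has_zmax A : (exists x, A x) -> is_closed B A ->
  Defs.invariant B sigma A -> exists i, A (zmax i).
Proof.
move=> [x Ax] hcl hA.
have [zs hzs] : exists zs : nat -> XB B, forall M,
    A (zs M) /\ forall j, j < M -> maxE B ord j (pth B (zs M) j).
  apply: (functional_choice (fun M z => A z /\ forall j, j < M -> maxE B ord j (pth B z j))).
  move=> M; have [z [z_max z_ag]] := exists_max_prefix (fun j (_ : M <= j) => svalP x j).
  exists z; split=> //; apply: (invariant_agree_from (m:=M) hA _ Ax) => j hj; by rewrite z_ag.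
have [y hy] := XB_cluster zs.
have y_max : forall n, maxE B ord n (pth B y n).
  move=> n; have [M [hnM hM]] := hy n.+1 n.+1.
  by rewrite -hM //; apply: (proj2 (hzs M)).
have [i yi] := max_path_zmax y_max.
exists i; apply: (closed_mem (y := zmax i) hcl) => N; have [M [_ hM]] := hy N 0.
by exists (zs M); split; [exact: (proj1 (hzs M)) | rewrite -yi].
Qed.

Section Classes.
Variable cls : forall n, V B n -> option 'I_k.
Arguments cls : clear implicits.

Definition class_set (i : 'I_k) (x : XB B) : Prop :=
  forall n, 1 <= n -> cls n (src (pth B x n)) = Some i.

Hypothesis cls_simple : k_simple B k cls.
Hypothesis cls_zmax : forall i, class_set i (zmax i).
Hypothesis cls_zmin : forall i, class_set i (zmin i).
Arguments cls_zmax : clear implicits.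
Arguments cls_zmin : clear implicits.

Lemma class_set_uniq (x : XB B) i j : class_set i x -> class_set j x -> i = j.
Proof. by move=> /(_ 1 isT) + /(_ 1 isT) => -> []. Qed.

Lemma cls_path_down (y : XB B) i m : cls m (src (pth B y m)) = Some i ->
  forall n, 1 <= n <= m -> cls n (src (pth B y n)) = Some i.
Proof.
have [cls_down _] := cls_simple.
elim: m => [|m IH] hm n /andP [h1 h2]; first by lia.
case: (ltngtP n m.+1) => hn; [|lia|by rewrite hn].
apply: IH; last by lia.
by apply: cls_down; [lia | rewrite (svalP y m)].
Qed.

Lemma class_set_agree_from (x y : XB B) d i :
  agree_from (pth B x) (pth B y) d -> class_set i x -> class_set i y.
Proof.
move=> hag hx n hn.
apply: (@cls_path_down y i (maxn n d)); last by rewrite hn leq_maxl.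
by rewrite -hag ?leq_maxr //; apply: hx; lia.
Qed.

Lemma class_set_closed i : is_closed B (class_set i).
Proof.
move=> x nCx.
have [n hn] : exists n, ~ (1 <= n -> cls n (src (pth B x n)) = Some i).
  by apply: NNPP => h; apply: nCx => n; apply: NNPP => h'; apply: h; exists n.
by exists n.+1 => y hy Cy; apply: hn => h1; rewrite -(hy n (ltnSn n)); exact: Cy.
Qed.

Lemma class_set_invariant i : Defs.invariant B sigma (class_set i).
Proof.
move=> x; case: (vershik_agree_from x) => [[j [-> ->]]|[d hd]].
  split=> hC.
  - by rewrite (class_set_uniq hC (cls_zmax j)); exact: cls_zmin.
  - by rewrite (class_set_uniq hC (cls_zmin j)); exact: cls_zmax.
by split; apply: (class_set_agree_from (d := d)) => // j hj; rewrite hd.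
Qed.

(* Splice [y] below level [N+1] to [z_{i,max}] above a level [m] where every
   vertex of [V^m_i] is connected to [V^{N+1}_i]. *)
Lemma closed_invariant_has_class A : (exists x, A x) -> is_closed B A ->
  Defs.invariant B sigma A -> exists i, forall y, class_set i y -> A y.
Proof.
move=> hne hcl hA; have [i Ai] := closed_invariant_has_zmax hne hcl hA.
exists i => y hy; apply: (closed_mem (y := y) hcl) => N.
have [_ hconn] := cls_simple.
have [[|m] [hNm hm]] := hconn i N.+1 isT; first by [].
have [p [[_ [hp hpend]] hpsrc]] :=
  hm (src (pth B y N.+1)) (src (pth B (zmax i) m.+1)) (hy N.+1 isT) (cls_zmax i m.+1 isT).
pose z0 := glue (pth B y) (glue p (pth B (zmax i)) m.+1) N.+1.
have z0_linked : forall j, linked z0 j.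
  move=> j; apply: glue_linked => [hj|hj|[->]].
  - exact: (svalP y j).
  - apply: glue_linked => [hj'|_|[->]] //; [exact: hp | exact: (svalP (zmax i) j)].
  - by rewrite /glue hNm hpsrc; exact: (svalP y N).
have Az : A (exist _ z0 z0_linked).
  apply: (invariant_agree_from (m := m.+1) hA _ Ai) => j hj.
  by rewrite /= /z0 /glue; case: ltnP => h1; [lia | case: ltnP => h2 //; lia].
exists (exist _ z0 z0_linked); split=> // j hj.
by rewrite /= /z0 /glue (ltn_trans hj (ltnSn N)).
Qed.

Lemma minimal_class_set i : minimal_set B sigma (class_set i).
Proof.
split; first by exists (zmax i); exact: cls_zmax.
split; first exact: class_set_closed.
split; first exact: class_set_invariant.
move=> A' hsub hne hcl hA' x Cx.
have [j hj] := closed_invariant_has_class hne hcl hA'.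
have Cj := hj _ (cls_zmax j).
by rewrite (class_set_uniq (hsub _ Cj) (cls_zmax j)) in Cx; exact: hj.
Qed.

Lemma minimal_set_class A : minimal_set B sigma A -> exists i, forall x, A x <-> class_set i x.
Proof.
move=> [hne [hcl [hA hmin]]].
have [i hi] := closed_invariant_has_class hne hcl hA.
exists i => x; split=> [Ax|]; last exact: hi.
apply: (hmin (class_set i)) => //; first by exists (zmax i); exact: cls_zmax.
- exact: class_set_closed.
- exact: class_set_invariant.
Qed.

End Classes.
End Vershik.
End Order.
End Bratteli.

Unset Implicit Arguments.

Theorem theorem5p10 (B : bratteli) (k : nat)
  (ord : forall n, E B n -> nat) (cls : forall n, V B n -> option 'I_k)
  (zmax zmin : 'I_k -> XB B) (sigma : XB B -> XB B) :
  k_simple_ordered B ord k cls zmax zmin ->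
  non_elementary B k cls ->
  (forall x, vershik B ord k zmax zmin x (sigma x)) ->
  exists M : 'I_k -> (XB B -> Prop),
    (forall i, minimal_set B sigma (M i)) /\
    (forall i j, (forall x, M i x <-> M j x) -> i = j) /\
    (forall A, minimal_set B sigma A -> exists i, forall x, A x <-> M i x).
Proof.
move=> [ord_inj [cls_simple [cls_zmax [cls_zmin [max_paths _]]]]] _ sigma_vershik.
exists (class_set cls); split; [|split].
- exact (minimal_class_set ord_inj max_paths sigma_vershik cls_simple cls_zmax cls_zmin).
- move=> i j hij; apply: (class_set_uniq (cls_zmax i)); exact/hij/cls_zmax.
- exact (minimal_set_class ord_inj max_paths sigma_vershik cls_simple cls_zmax cls_zmin).
Qed.
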